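(* Let $q$ be a power of a prime $p$, let $n \geq 2$, let $\zeta$ be a primitive element of $\mathbb{F}_{q^n}$ and let $w \in \{0,1,\ldots,n\}$. If $q = 2$, further assume that $w \neq n$. Then $$\sigma_w(\zeta^k) = \mathcal{F}_\zeta[\delta_w](k) \quad \text{for all } k \in \mathbb{Z}_{q^n-1}.$$
   Context: For $0 \le w \le n$, $\sigma_w : \mathbb{F}_{q^n} \to \mathbb{F}_q$ is defined by $\sigma_0(\xi) = 1$ and, for $1 \le w \le n$, $\sigma_w(\xi) = \sum_{0 \le i_1 < \cdots < i_w \le n-1} \xi^{q^{i_1} + \cdots + q^{i_w}}$ (so that the characteristic polynomial of $\xi$ over $\mathbb{F}_q$ is $\prod_{k=0}^{n-1}(x - \xi^{q^k}) = \sum_{w=0}^n (-1)^w \sigma_w(\xi) x^{n-w}$). Define $\Omega(0) = \{0\} \subseteq \mathbb{Z}_{q^n-1}$ and, for $1 \le w \le n$, $\Omega(w)$ is the set of $k \in \mathbb{Z}_{q^n-1}$ whose canonical representative in $\{0,1,\ldots,q^n-2\}$ equals $q^{i_1} + \cdots + q^{i_w}$ for some integers $0 \le i_1 < \cdots < i_w \le n-1$. Then $\delta_w : \mathbb{Z}_{q^n-1} \to \{0,1\} \subseteq \mathbb{F}_p$ is the indicator function of $\Omega(w)$. For $N \mid q^n-1$, a primitive $N$-th root of unity $\zeta_N \in \mathbb{F}_{q^n}$, and $f : \mathbb{Z}_N \to \mathbb{F}_{q^n}$, the discrete Fourier transform is $\mathcal{F}_{\zeta_N}[f](i) = \sum_{j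 \in \mathbb{Z}_N} f(j)\zeta_N^{ij}$; here $N = q^n-1$ and $\zeta_N = \zeta$. *)

From HB Require Import structures.
From mathcomp Require Import all_boot all_order all_algebra all_field.
Unset Printing Implicit Defensive.
Import GRing.Theory.
Local Open Scope ring_scope.

Definition sigma (L : finFieldType) (q n w : nat) (xi : L) : L :=
  if w is 0 then 1
  else \sum_(S : {set 'I_n} | #|S| == w) xi ^+ (\sum_(i in S) q ^ i)%N.

Definition Omega (q n w : nat) (j : 'I_(q ^ n).-1) : bool :=
  if w is 0 then (val j == 0)%N
  else [exists S : {set 'I_n}, (#|S| == w) && (val j == \sum_(i in S) q ^ i)%N].

(* delta_w : Z_{q^n-1} -> {0,1} subset F_p, viewed inside L (F_p is the prime subfield). *)
Definition delta (L : finFieldType) (q n w : nat) (j : 'I_(q ^ n).-1) : L :=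
  (Omega q n w j)%:R.

Definition dft (L : finFieldType) (N : nat) (z : L) (f : 'I_N -> L) (i : 'I_N) : L :=
  \sum_(j < N) f j * z ^+ (i * j)%N.

From HB Require Import structures.
From mathcomp Require Import all_boot all_order all_algebra all_field.
From mathcomp Require Import zify.
Import GRing.Theory.

(* The exponents q^i_1 + ... + q^i_w (i_1 < ... < i_w < n) are the numbers whose
   base-q digits are w ones and n - w zeros. By uniqueness of base-q expansions
   they are pairwise distinct, and they are all smaller than q^n - 1, except
   for the all-ones number 2^n - 1 when q = 2 and w = n. Hence the sum defining
   sigma_w(zeta^k) is a reindexing of the Fourier sum of the indicator of
   Omega(w). *)

Lemma geometric_sum_predn (q m : nat) : 0 < q ->
  (\sum_(i < m) q ^ i) * q.-1 = (q ^ m).-1.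
Proof.
move=> q_gt0; elim: m => [|m IHm]; first by rewrite big_ord0.
rewrite big_ord_recr /= mulnDl IHm expnS.
have := expn_gt0 q m; rewrite q_gt0; nia.
Qed.

Section BaseExpansion.

Variables (q n : nat).
Hypothesis q_gt1 : 1 < q.

Definition expsum (S : {set 'I_n}) : nat := \sum_(i in S) q ^ i.

Lemma expsum_low_lt (S : {set 'I_n}) (m : nat) : m <= n ->
  \sum_(i in S | i < m) q ^ i < q ^ m.
Proof.
move=> le_mn; have q_gt0 : 0 < q by apply: ltnW.
apply: (@leq_ltn_trans (\sum_(i < m) q ^ i)).
  rewrite (big_ord_widen n (fun i => q ^ i) le_mn) [X in X <= _]big_mkcond.
  by rewrite [X in _ <= X]big_mkcond leq_sum // => i _; case: (i \in S); case: (i < m).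
have := @geometric_sum_predn q m q_gt0; have := expn_gt0 q m; rewrite q_gt0; nia.
Qed.

Lemma expsum_high (S : {set 'I_n}) (m : nat) :
  \sum_(i in S | m <= i) q ^ i = q ^ m * \sum_(i in S | m <= i) q ^ (i - m).
Proof.
rewrite big_distrr; apply: eq_bigr => i /andP[_ le_mi] /=.
by rewrite -expnD subnKC.
Qed.

Lemma expsum_digit (S : {set 'I_n}) (m : 'I_n) :
  (expsum S %/ q ^ m) %% q = (m \in S).
Proof.
rewrite /expsum (bigID (fun i : 'I_n => i < m)) /=.
under [X in _ + X]eq_bigl do rewrite -leqNgt.
rewrite expsum_high addnC mulnC divnMDl ?expn_gt0 ?(ltnW q_gt1) //.
rewrite divn_small ?addn0; last exact/expsum_low_lt/ltnW.
rewrite (bigID (fun i : 'I_n => i == m)) /= -modnDmr.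
have /eqP -> : q %| \sum_(i < n | (i \in S) && (m <= i) && (i != m)) q ^ (i - m).
  apply: dvdn_sum => i /andP[/andP[_ le_mi] ne_im].
  by apply: dvdn_exp; rewrite // subn_gt0 ltn_neqAle eq_sym ne_im le_mi.
rewrite addn0; case: (boolP (m \in S)) => [mS | mNS]; last first.
  by rewrite big_pred0 ?mod0n // => i; case: eqP => [->|]; rewrite ?(negbTE mNS) ?andbF.
rewrite (big_pred1 m) ?subnn ?modn_small // => i /=.
by case: eqP => [->|]; rewrite ?mS ?leqnn ?andbF.
Qed.

Lemma expsum_inj : injective expsum.
Proof.
move=> S T eqST; apply/setP => m.
by have := expsum_digit S m; rewrite eqST expsum_digit => /eqP; do 2!case: (_ \in _).
Qed.

Lemma expsum_lt_predn (S : {set 'I_n}) : 0 < n -> (q = 2 -> #|S| < n) ->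
  expsum S < (q ^ n).-1.
Proof.
move=> n_gt0 small_S.
have split_full : expsum S + \sum_(i in ~: S) q ^ i = \sum_(i < n) q ^ i.
  by rewrite [RHS](bigID (mem S)); congr (_ + _); apply: eq_bigl => i; rewrite inE.
have := @geometric_sum_predn q n (ltnW q_gt1).
case: (eqVneq q 2) => [q2 | q_neq2].
  have /card_gt0P[i0 i0_out] : 0 < #|~: S|.
    by have := cardsC S; rewrite card_ord; have := small_S q2; lia.
  have : q ^ i0 <= \sum_(i in ~: S) q ^ i by rewrite (bigD1 i0) //= leq_addr.
  by rewrite q2 in split_full *; have := expn_gt0 2 i0; lia.
have : 0 < \sum_(i < n) q ^ i.
  by rewrite (bigD1 (Ordinal n_gt0)) //= expn0 addn_gt0.
by move: split_full; set X := expsum S; set F := \sum_(i < n) _; nia.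
Qed.

End BaseExpansion.

Local Open Scope ring_scope.

Lemma sum_ord_exists_image (R : nmodType) (T : finType) (A : {pred T}) (f : T -> nat)
    (N : nat) (F : nat -> R) :
  {in A &, injective f} -> {in A, forall x, (f x < N)%N} ->
  \sum_(j < N | [exists x in A, val j == f x]) F j = \sum_(x in A) F (f x).
Proof.
case: N => [|N] f_inj f_lt.
  by rewrite big_ord0 big_pred0 // => x; apply/negP => /f_lt.
have inordK_A x : x \in A -> (inord (f x) : 'I_N.+1) = f x :> nat.
  by move=> Ax; exact: inordK (f_lt x Ax).
have h_inj : {in A &, injective (fun x => inord (f x) : 'I_N.+1)}.
  by move=> x y Ax Ay /(congr1 (@nat_of_ord _)); rewrite !inordK_A // => /f_inj; apply.
rewrite (eq_bigr (fun x => F (inord (f x) : 'I_N.+1))); last first.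
  by move=> x Ax; rewrite inordK_A.
rewrite -(big_imset (fun j : 'I_N.+1 => F j) h_inj) /=; apply: eq_bigl => j.
apply/existsP/imsetP => [[x /andP[Ax /eqP j_fx]] | [x Ax ->]].
  by exists x => //; apply: val_inj => /=; rewrite inordK_A.
by exists x; rewrite Ax /= inordK_A.
Qed.

Lemma dft_indicator (L : finFieldType) (N : nat) (z : L) (P : pred 'I_N) (k : 'I_N) :
  dft L N z (fun j => (P j)%:R) k = \sum_(j | P j) z ^+ (k * j).
Proof.
by rewrite /dft [RHS]big_mkcond; apply: eq_bigr => j _; case: (P j); rewrite ?mul1r ?mul0r.
Qed.

Theorem lemma3p1 (p e q n : nat) (L : finFieldType)
  (hp : prime p) (he : (0 < e)%N) (hq : q = (p ^ e)%N) (hn : (2 <= n)%N)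
  (hL : #|L| = (q ^ n)%N)
  (zeta : L) (hz : (q ^ n).-1.-primitive_root zeta)
  (w : nat) (hw : (w <= n)%N) (hq2 : q = 2%N -> w <> n) :
  forall k : 'I_(q ^ n).-1,
    sigma L q n w (zeta ^+ k) = dft L ((q ^ n).-1) zeta (delta L q n w) k.
Proof.
move=> k.
have q_gt1 : (1 < q)%N by rewrite hq -{1}(expn0 p) ltn_exp2l // prime_gt1.
have n_gt0 : (0 < n)%N by apply: leq_trans hn.
have N_gt0 : (0 < (q ^ n).-1)%N.
  by rewrite -subn1 subn_gt0 -{1}(expn0 q) ltn_exp2l.
rewrite /delta dft_indicator.
case: w hw hq2 => [|w] hw hq2.
  by rewrite (big_pred1 (Ordinal N_gt0)) ?muln0 // => j; rewrite /= -val_eqE.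
rewrite /sigma (eq_bigr (fun S => zeta ^+ (k * @expsum q n S))) => [|S _]; last first.
  by rewrite exprM.
symmetry; apply: (@sum_ord_exists_image _ _ (fun S : {set 'I_n} => #|S| == w.+1)
  (@expsum q n) _ (fun j => zeta ^+ (k * j))).
  by move=> S T _ _; apply: expsum_inj.
move=> S /eqP card_S; apply: expsum_lt_predn => // q2.
by rewrite card_S; have := hq2 q2; lia.
Qed.
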